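(* Let $K\ge2$, $\eta>0$, and let $\mathbf r\in\mathbb R^K$ be a mean reward vector with no ties, i.e. $r(a)\ne r(a')$ whenever $a\ne a'$; let $a^*=\arg\max_a r(a)$. For $\boldsymbol\theta\in\mathbb R^K$ let $\pi_{\boldsymbol\theta}$ be the softmax policy $\pi_{\boldsymbol\theta}(a)=e^{\theta(a)}/\sum_b e^{\theta(b)}$ and $\Phi_\eta(\boldsymbol\theta)=\pi_{\boldsymbol\theta}^\top\mathbf r+\frac1\eta\sum_a\log\pi_{\boldsymbol\theta}(a)$. Then for all $\boldsymbol\theta\in\mathbb R^K$, $$\|\nabla_{\boldsymbol\theta}\Phi_\eta(\boldsymbol\theta)\|_2\ge\Big(\pi_{\boldsymbol\theta}(a^* )\big(r(a^* )-\pi_{\boldsymbol\theta}^\top\mathbf r\big)-\frac K\eta\Big)^+ ,$$ where $(x)^+=\max\{0,x\}$.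
   Context: Setting: $K$-armed bandit with mean rewards $\mathbf r$; $\Phi_\eta$ is the log-barrier regularized objective. *)

From HB Require Import structures.
From mathcomp Require Import all_boot all_order all_algebra.
From mathcomp Require Import all_classical all_reals all_analysis.
Set Implicit Arguments. Unset Strict Implicit. Unset Printing Implicit Defensive.
Import Order.TTheory GRing.Theory Num.Theory.
Local Open Scope ring_scope.

Definition softmax (R : realType) (K : nat) (theta : 'rV[R]_K) (a : 'I_K) : R :=
  expR (theta 0 a) / \sum_(b < K) expR (theta 0 b).

Definition expected_reward (R : realType) (K : nat) (theta r : 'rV[R]_K) : R :=
  \sum_(a < K) softmax theta a * r 0 a.

Definition Phi (R : realType) (K : nat) (eta : R) (r theta : 'rV[R]_K) : R :=
  expected_reward theta r + eta^-1 * \sum_(a < K) ln (softmax theta a).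

Definition partial (R : realType) (K : nat) (f : 'rV[R]_K -> R)
  (theta : 'rV[R]_K) (a : 'I_K) : R :=
  derive1 (fun t : R => f (theta + t *: delta_mx 0 a)) 0.

Definition grad_norm (R : realType) (K : nat) (f : 'rV[R]_K -> R)
  (theta : 'rV[R]_K) : R :=
  Num.sqrt (\sum_(a < K) (partial f theta a) ^+ 2).

(* The Euclidean norm of the gradient dominates the absolute value of every
   partial derivative.  Differentiating along coordinate a, the softmax Jacobian
   d pi(b) = pi(b) ([b = a] - pi(a)) yields
     d_a Phi_eta = pi(a) (r(a) - pi^T r) + (1 - K pi(a)) / eta,
   and 1 - K pi(a) >= -K because pi(a) <= 1. *)

From HB Require Import structures.
From mathcomp Require Import all_boot all_order all_algebra.
From mathcomp Require Import all_classical all_reals all_analysis.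
From mathcomp Require Import ring lra.

Set Implicit Arguments.
Unset Strict Implicit.
Unset Printing Implicit Defensive.
Import Order.TTheory GRing.Theory Num.Theory.
Local Open Scope ring_scope.

Lemma sum_mul_indicator (R : pzSemiRingType) (I : finType) (i : I)
    (F : I -> R) :
  \sum_j F j * (j == i)%:R = F i.
Proof.
rewrite (bigD1 i) //= eqxx mulr1 big1 ?addr0 // => j /negPf ->.
by rewrite mulr0.
Qed.

Lemma is_derive_sumr (R : realType) (n : nat) (h : 'I_n -> R -> R) (x : R)
    (dh : 'I_n -> R) :
  (forall i, is_derive x 1 (h i) (dh i)) ->
  is_derive x 1 (fun t => \sum_(i < n) h i t) (\sum_(i < n) dh i).
Proof. by move=> /is_derive_sum; rewrite fct_sumE. Qed.

Lemma partial_is_derive (R : realType) (K : nat) (f : 'rV[R]_K -> R)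
    (theta : 'rV[R]_K) (a : 'I_K) (d : R) :
  is_derive (0 : R) 1 (fun t => f (theta + t *: delta_mx 0 a)) d ->
  partial f theta a = d.
Proof. by move=> fd; rewrite /partial derive1E derive_val. Qed.

Lemma normr_partial_le_grad_norm (R : realType) (K : nat)
    (f : 'rV[R]_K -> R) (theta : 'rV[R]_K) (a : 'I_K) :
  `|partial f theta a| <= grad_norm f theta.
Proof.
rewrite /grad_norm -sqrtr_sqr ler_wsqrtr // (bigD1 a) //= lerDl.
by apply: sumr_ge0 => b _; exact: sqr_ge0.
Qed.

Section Softmax.
Variables (R : realType) (K : nat).
Implicit Types (theta : 'rV[R]_K) (a b : 'I_K).

Lemma sum_expR_gt0 theta a : 0 < \sum_b expR (theta 0 b).
Proof.
rewrite (bigD1 a) //= ltr_pwDl ?expR_gt0 //.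
by apply: sumr_ge0 => b _; exact/ltW/expR_gt0.
Qed.

Lemma softmax_gt0 theta a : 0 < softmax theta a.
Proof. by rewrite divr_gt0 ?expR_gt0 // (sum_expR_gt0 _ a). Qed.

Lemma softmax_le1 theta a : softmax theta a <= 1.
Proof.
rewrite ler_pdivrMr ?(sum_expR_gt0 _ a) // mul1r (bigD1 a) //= lerDl.
by apply: sumr_ge0 => b _; exact/ltW/expR_gt0.
Qed.

Lemma ln_softmax theta a :
  ln (softmax theta a) = theta 0 a - ln (\sum_b expR (theta 0 b)).
Proof.
by rewrite ln_div ?expRK // posrE ?expR_gt0 ?(sum_expR_gt0 _ a).
Qed.

End Softmax.

Section CoordinateDerivatives.
Variables (R : realType) (K : nat) (theta : 'rV[R]_K) (a : 'I_K).

Let shift (t : R) := theta + t *: delta_mx 0 a.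

Let shift0 : shift 0 = theta.
Proof. by rewrite /shift scale0r addr0. Qed.

Lemma is_derive_shift_coord b :
  is_derive (0 : R) 1 (fun t => shift t 0 b) (b == a)%:R.
Proof.
have -> : (fun t => shift t 0 b) = (fun t => theta 0 b + t * (b == a)%:R).
  by apply: funext => t; rewrite /shift !mxE eqxx.
by apply: is_derive_eq; rewrite scaler0 !add0r mul1r; exact: mulr1.
Qed.

Lemma is_derive_ln_sum_expR :
  is_derive (0 : R) 1 (fun t => ln (\sum_c expR (shift t 0 c)))
    (softmax theta a).
Proof.
have dZ : is_derive (0 : R) 1 (fun t => \sum_c expR (shift t 0 c))
    (expR (theta 0 a)).
  rewrite -(sum_mul_indicator a (fun c => expR (theta 0 c))).
  apply: is_derive_sumr => c.
  have := is_derive1_comp (is_derive_expR _) (is_derive_shift_coord c).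
  by rewrite shift0.
have := is_derive1_comp (is_derive1_ln (sum_expR_gt0 (shift 0) a)) dZ.
by rewrite shift0 mulrC.
Qed.

Lemma is_derive_ln_softmax b :
  is_derive (0 : R) 1 (fun t => ln (softmax (shift t) b))
    ((b == a)%:R - softmax theta a).
Proof.
under eq_fun => t do rewrite ln_softmax.
exact: is_deriveB (is_derive_shift_coord b) is_derive_ln_sum_expR.
Qed.

Lemma is_derive_softmax b :
  is_derive (0 : R) 1 (fun t => softmax (shift t) b)
    (softmax theta b * ((b == a)%:R - softmax theta a)).
Proof.
have -> : (fun t => softmax (shift t) b) =
    expR \o (fun t => ln (softmax (shift t) b)).
  by apply: funext => t /=; rewrite lnK // posrE softmax_gt0.
have := is_derive1_comp (is_derive_expR _) (is_derive_ln_softmax b).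
by rewrite shift0 lnK // posrE softmax_gt0.
Qed.

Lemma is_derive_expected_reward (r : 'rV[R]_K) :
  is_derive (0 : R) 1 (fun t => expected_reward (shift t) r)
    (softmax theta a * (r 0 a - expected_reward theta r)).
Proof.
have -> : softmax theta a * (r 0 a - expected_reward theta r) =
    \sum_b (softmax theta b * ((b == a)%:R - softmax theta a)) * r 0 b.
  rewrite mulrBr /expected_reward mulr_sumr.
  rewrite -(sum_mul_indicator a (fun b => softmax theta b * r 0 b)) -sumrB.
  by apply: eq_bigr => b _; ring.
apply: is_derive_sumr => b.
have := is_deriveM (is_derive_softmax b) (is_derive_cst (r 0 b) (0 : R) 1).
by rewrite scaler0 add0r [_ *: _]mulrC.
Qed.

Lemma is_derive_sum_ln_softmax :
  is_derive (0 : R) 1 (fun t => \sum_b ln (softmax (shift t) b))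
    (1 - K%:R * softmax theta a).
Proof.
have -> : 1 - K%:R * softmax theta a = \sum_b ((b == a)%:R - softmax theta a).
  rewrite sumrB sumr_const card_ord mulr_natl.
  under eq_bigr do rewrite -[(_ == a)%:R]mul1r.
  by rewrite (sum_mul_indicator a (fun=> 1)).
exact: is_derive_sumr is_derive_ln_softmax.
Qed.

Lemma partial_Phi (eta : R) (r : 'rV[R]_K) :
  partial (Phi eta r) theta a =
  softmax theta a * (r 0 a - expected_reward theta r)
  + eta^-1 * (1 - K%:R * softmax theta a).
Proof.
apply: partial_is_derive.
exact: is_deriveD (is_derive_expected_reward r)
  (is_deriveZ eta^-1 is_derive_sum_ln_softmax).
Qed.

End CoordinateDerivatives.

Lemma partial_Phi_ge (R : realType) (K : nat) (eta : R) (r theta : 'rV[R]_K)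
    (a : 'I_K) :
  0 <= eta ->
  softmax theta a * (r 0 a - expected_reward theta r) - K%:R / eta
  <= partial (Phi eta r) theta a.
Proof.
move=> eta_ge0; rewrite partial_Phi lerD2l -mulNr [eta^-1 * _]mulrC.
rewrite ler_wpM2r ?invr_ge0 //.
have K_ge0 : 0 <= K%:R :> R by exact: ler0n.
have := softmax_le1 theta a; nra.
Qed.

Theorem lemma4p2 (R : realType) (K : nat) (eta : R) (r : 'rV[R]_K)
  (astar : 'I_K) :
  (2 <= K)%N -> 0 < eta ->
  (forall a a' : 'I_K, a != a' -> r 0 a != r 0 a') ->
  (forall a : 'I_K, a != astar -> r 0 a < r 0 astar) ->
  forall theta : 'rV[R]_K,
    Num.max 0 (softmax theta astar * (r 0 astar - expected_reward theta r)
               - K%:R / eta)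
    <= grad_norm (Phi eta r) theta.
Proof.
move=> _ eta_gt0 _ _ theta.
rewrite ge_max sqrtr_ge0 /=.
apply: le_trans (partial_Phi_ge r theta astar (ltW eta_gt0)) _.
exact: le_trans (ler_norm _) (normr_partial_le_grad_norm _ _ astar).
Qed.
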